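(* For every integer $n\ge 4$, $\chi^{\mathsf{s}}_{3,4}(n)\ge \lfloor\sqrt{n}\rfloor$.
   Context: A $k$-uniform hypergraph $H=(V,E)$ consists of a finite set $V$ and $E\subseteq\binom{V}{k}$. A (linear) embedding of $H$ into $\mathbb{R}^d$ is a map $\phi:V(H)\to\mathbb{R}^d$ with $\dim\operatorname{aff}\phi(e)=k-1$ for every edge $e$ and $\operatorname{conv}\phi(e_1)\cap\operatorname{conv}\phi(e_2)=\operatorname{conv}\phi(e_1\cap e_2)$ for all edges $e_1,e_2$. $\mathcal{E}_{d,k}$ is the set of $k$-uniform hypergraphs admitting such an embedding into $\mathbb{R}^d$. A strong $c$-coloring of $H$ is a map $\kappa:V(H)\to\{1,\dots,c\}$ with $|\kappa(e)|=k$ for every edge $e$; $\chi^{\mathsf{s}}(H)$ is the least such $c$. $\chi^{\mathsf{s}}_{d,k}(n)=\max\{\chi^{\mathsf{s}}(H): H\in\mathcal{E}_{d,k},\ |V(H)|=n\}$. *)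

From HB Require Import structures.
From Stdlib Require Import Reals.
From mathcomp Require Import all_boot.

Set Implicit Arguments.
Unset Strict Implicit.
Unset Printing Implicit Defensive.

Record hypergraph (n k : nat) := Hypergraph {
  hedges : {set {set 'I_n}};
  huniform : forall e, e \in hedges -> #|e| = k }.

Definition strong_colorable n k (H : hypergraph n k) (c : nat) : bool :=
  [exists kappa : {ffun 'I_n -> 'I_c},
     [forall e in hedges H, #|kappa @: e| == k]].

Lemma strong_colorable_n n k (H : hypergraph n k) : strong_colorable H n.
Proof.
apply/existsP; exists [ffun x => x]; apply/forallP => e; apply/implyP => He.
have -> : [ffun x : 'I_n => x] @: e = e.
  by rewrite -[RHS]imset_id; apply: eq_imset => x; rewrite ffunE.
by rewrite (huniform He).
Qed.

Definition chis n k (H : hypergraph n k) : nat :=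
  ex_minn (ex_intro (fun c => strong_colorable H c) n (strong_colorable_n H)).

Definition in_conv (d n : nat) (phi : 'I_n -> 'I_d -> R) (S : {set 'I_n})
    (x : 'I_d -> R) : Prop :=
  exists lam : 'I_n -> R,
    (forall v, v \in S -> Rle R0 (lam v)) /\
    \big[Rplus/R0]_(v in S) lam v = R1 /\
    (forall i, x i = \big[Rplus/R0]_(v in S) Rmult (lam v) (phi v i)).

(* The family (phi v)_{v in S} is affinely independent; for |S| = k this is
   exactly dim aff phi(S) = k - 1. *)
Definition aff_indep (d n : nat) (phi : 'I_n -> 'I_d -> R) (S : {set 'I_n}) : Prop :=
  forall lam : 'I_n -> R,
    \big[Rplus/R0]_(v in S) lam v = R0 ->
    (forall i, \big[Rplus/R0]_(v in S) Rmult (lam v) (phi v i) = R0) ->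
    forall v, v \in S -> lam v = R0.

Definition is_embedding (d n k : nat) (H : hypergraph n k)
    (phi : 'I_n -> 'I_d -> R) : Prop :=
  (forall e, e \in hedges H -> aff_indep phi e) /\
  (forall e1 e2, e1 \in hedges H -> e2 \in hedges H ->
     forall x, (in_conv phi e1 x /\ in_conv phi e2 x) <-> in_conv phi (e1 :&: e2) x).

Definition embeddable (d n k : nat) (H : hypergraph n k) : Prop :=
  exists phi : 'I_n -> 'I_d -> R, is_embedding H phi.

(* Let m = floor(sqrt n) and t_i = i.  The vertices x < m*m encode the pairs
   (x %/ m, x %% m).  The diagonal vertex (i,i) is sent to the moment-curve
   point a_i = (t_i, t_i^2, t_i^3); for i < j the vertices (i,j) and (j,i) are
   sent to the midpoint of a_i a_j pushed by a small e along the z-axis resp.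
   the y-axis.  The edges are {(i,i), (j,j), (i,j), (j,i)} for i <> j.  Any two
   diagonal vertices lie in a common edge, so every strong colouring uses at
   least m colours.

   Each edge is a non-degenerate tetrahedron, and two edges meet properly
   because an affine form separates them weakly (criterion [separated_meet]):
   the form c0 + c1 x + c2 y + c3 z takes the value q(t_i) at a_i, where q is
   the cubic with coefficients c, and (q(t_i) + q(t_j))/2 + e c3 resp. e c2 at
   the perturbed midpoints.  Disjoint edges are separated by the cubic with
   values 1, 1, -1, -1, edges sharing an index s by the quadratic with values
   0, 1, -1; e is chosen so that |e c2|, |e c3| < 1/2 for the finitely many
   forms involved. *)

From HB Require Import structures.
From Stdlib Require Import Reals Lra.
From mathcomp Require Import all_boot zify.

Set Implicit Arguments.
Unset Strict Implicit.
Unset Printing Implicit Defensive.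

Local Open Scope R_scope.

(* Rplus/Rmult form a commutative monoid with distributivity, so the generic
   bigop lemmas apply to the real sums of the definitions. *)
Lemma Rplus_assoc_law : associative Rplus.
Proof. by move=> x y z; rewrite Rplus_assoc. Qed.
HB.instance Definition _ :=
  Monoid.isComLaw.Build R R0 Rplus Rplus_assoc_law Rplus_comm Rplus_0_l.
HB.instance Definition _ := Monoid.isMulLaw.Build R R0 Rmult Rmult_0_l Rmult_0_r.
HB.instance Definition _ :=
  Monoid.isAddLaw.Build R Rmult Rplus Rmult_plus_distr_r Rmult_plus_distr_l.

Lemma sumR_ge0 (I : finType) (P : pred I) (F : I -> R) :
  (forall i, P i -> 0 <= F i) -> 0 <= \big[Rplus/R0]_(i | P i) F i.
Proof. by move=> H; apply: (big_ind (fun x => 0 <= x)) => //; [lra | move=> x y; lra]. Qed.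

Lemma sumR_le0 (I : finType) (P : pred I) (F : I -> R) :
  (forall i, P i -> F i <= 0) -> \big[Rplus/R0]_(i | P i) F i <= 0.
Proof. by move=> H; apply: (big_ind (fun x => x <= 0)) => //; [lra | move=> x y; lra]. Qed.

Lemma sumR_term (I : finType) (P : pred I) (F : I -> R) j :
  (forall i, P i -> 0 <= F i) -> P j -> F j <= \big[Rplus/R0]_(i | P i) F i.
Proof.
move=> HF Pj; rewrite (bigD1 j Pj) /=.
suff : 0 <= \big[Rplus/R0]_(i | P i && (i != j)) F i by lra.
by apply: sumR_ge0 => i /andP[/HF].
Qed.

Lemma uniform_small_factor (I : finType) (F : I -> R) :
  exists e, 0 < e /\ forall p, Rabs (e * F p) < 1/2.
Proof.
set K := \big[Rplus/R0]_(p : I) Rabs (F p).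
have HK : 0 <= K by apply: sumR_ge0 => p _; apply: Rabs_pos.
exists (/ (2 * (1 + K))); split; first by apply: Rinv_0_lt_compat; lra.
move=> p; rewrite Rabs_mult Rabs_pos_eq; last by left; apply: Rinv_0_lt_compat; lra.
have Hp : Rabs (F p) <= K by apply: (sumR_term (P := predT)) => // q _; apply: Rabs_pos.
apply: (Rmult_lt_reg_l (2 * (1 + K))); first lra.
rewrite -Rmult_assoc Rinv_r; lra.
Qed.

Section Separation.
Variables (d n : nat) (phi : 'I_n -> 'I_d -> R).

Definition aff_form (c0 : R) (c : 'I_d -> R) (x : 'I_d -> R) : R :=
  c0 + \big[Rplus/R0]_(i < d) (c i * x i).

Variables (c0 : R) (c : 'I_d -> R).
Local Notation f := (aff_form c0 c).

Lemma aff_form_conv (S : {set 'I_n}) lam x :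
  \big[Rplus/R0]_(v in S) lam v = R1 ->
  (forall i, x i = \big[Rplus/R0]_(v in S) (lam v * phi v i)) ->
  \big[Rplus/R0]_(v in S) (lam v * f (phi v)) = f x.
Proof.
move=> Hs Hx; rewrite /aff_form.
under eq_bigr => v _ do rewrite Rmult_plus_distr_l big_distrr /=.
rewrite big_split /= -big_distrl /= Hs Rmult_1_l; congr (_ + _).
rewrite exchange_big /=; apply: eq_bigr => i _; rewrite Hx big_distrr /=.
by apply: eq_bigr => v _; ring.
Qed.

Lemma aff_form_conv_le0 (S : {set 'I_n}) x :
  (forall v, v \in S -> f (phi v) <= 0) -> in_conv phi S x -> f x <= 0.
Proof.
move=> Hneg [lam [Hl [Hs Hx]]]; rewrite -(aff_form_conv Hs Hx).
apply: sumR_le0 => v Hv; have := Hl v Hv; have := Hneg v Hv; nra.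
Qed.

Lemma in_conv_restrict (S S' : {set 'I_n}) x :
  (forall v, v \in S -> 0 <= f (phi v)) ->
  (forall v, v \in S -> f (phi v) = 0 -> v \in S') ->
  in_conv phi S x -> f x <= 0 -> in_conv phi (S :&: S') x.
Proof.
move=> Hpos Hzero [lam [Hl [Hs Hx]]] Hfx.
have Hterm v : v \in S -> 0 <= lam v * f (phi v).
  by move=> Hv; apply: Rmult_le_pos; auto.
have Hvanish v : v \in S -> v \notin S' -> lam v = 0.
  move=> Hv HnS'.
  have Hf : f (phi v) <> 0 by move=> /(Hzero v Hv); rewrite (negbTE HnS').
  have := sumR_term Hterm Hv; rewrite (aff_form_conv Hs Hx) => Hle.
  have : lam v * f (phi v) = 0 by have := Hterm v Hv; lra.
  by case/Rmult_integral.
have restrict (F : 'I_n -> R) : (forall v, v \in S -> v \notin S' -> F v = 0) ->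
    \big[Rplus/R0]_(v in S) F v = \big[Rplus/R0]_(v in S :&: S') F v.
  move=> HF; rewrite (bigID (fun v => v \in S')) /= [X in _ + X]big1.
    by rewrite Rplus_0_r; apply: eq_bigl => v; rewrite in_setI.
  by move=> v /andP[]; apply: HF.
exists lam; split; first by move=> v; rewrite in_setI => /andP[]; auto.
split; first by rewrite -restrict // => v Hv HnS'; apply: Hvanish.
by move=> i; rewrite Hx restrict // => v Hv HnS'; rewrite Hvanish // Rmult_0_l.
Qed.

Lemma in_conv_sub (S S' : {set 'I_n}) x :
  S \subset S' -> in_conv phi S x -> in_conv phi S' x.
Proof.
move=> HS [lam [Hl [Hs Hx]]].
have ext (F : 'I_n -> R) : \big[Rplus/R0]_(v in S') (if v \in S then F v else 0)
    = \big[Rplus/R0]_(v in S) F v.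
  rewrite -big_mkcondr /=; apply: eq_bigl => v.
  by case Hv: (v \in S); rewrite ?andbF // andbT (subsetP HS).
exists (fun v => if v \in S then lam v else 0); split.
  by move=> v _; case: ifP => Hv; [auto | lra].
split; first by rewrite ext.
by move=> i; rewrite Hx -ext; apply: eq_bigr => v _; case: ifP => _ //; ring.
Qed.

Lemma separated_meet (S1 S2 : {set 'I_n}) :
  (forall v, v \in S1 -> 0 <= f (phi v)) ->
  (forall v, v \in S1 -> f (phi v) = 0 -> v \in S2) ->
  (forall v, v \in S2 -> f (phi v) <= 0) ->
  forall x, (in_conv phi S1 x /\ in_conv phi S2 x) <-> in_conv phi (S1 :&: S2) x.
Proof.
move=> Hpos Hzero Hneg x; split.
  by move=> [H1 H2]; apply: in_conv_restrict => //; apply: aff_form_conv_le0 H2.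
by move=> H; split; apply: in_conv_sub H; [apply: subsetIl | apply: subsetIr].
Qed.

End Separation.

(* Points of R^3 given by coordinates, and the cubic c0 + c1 t + c2 t^2 + c3 t^3;
   the affine form with coefficients (c0; c1, c2, c3) restricted to the moment
   curve t |-> (t, t^2, t^3) is this cubic. *)
Definition pt (x y z : R) : 'I_3 -> R :=
  fun k => if val k == 0%N then x else if val k == 1%N then y else z.

Definition cubic (c0 c1 c2 c3 t : R) : R := c0 + c1 * t + c2 * (t * t) + c3 * (t * t * t).

Lemma aff_form_pt c0 c1 c2 c3 x y z :
  aff_form c0 (pt c1 c2 c3) (pt x y z) = c0 + c1 * x + c2 * y + c3 * z.
Proof. by rewrite /aff_form !big_ord_recl big_ord0 /pt /=; ring. Qed.

(* Lagrange interpolation: the cubic through (t1,y1), ..., (t4,y4). *)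
Section CubicInterpolation.
Variables t1 t2 t3 t4 y1 y2 y3 y4 : R.
Let D1 := (t1 - t2) * (t1 - t3) * (t1 - t4).
Let D2 := (t2 - t1) * (t2 - t3) * (t2 - t4).
Let D3 := (t3 - t1) * (t3 - t2) * (t3 - t4).
Let D4 := (t4 - t1) * (t4 - t2) * (t4 - t3).
Definition interp3 := y1 / D1 + y2 / D2 + y3 / D3 + y4 / D4.
Definition interp2 := - (y1 * (t2 + t3 + t4) / D1 + y2 * (t1 + t3 + t4) / D2
  + y3 * (t1 + t2 + t4) / D3 + y4 * (t1 + t2 + t3) / D4).
Definition interp1 := y1 * (t2 * t3 + t2 * t4 + t3 * t4) / D1
  + y2 * (t1 * t3 + t1 * t4 + t3 * t4) / D2 + y3 * (t1 * t2 + t1 * t4 + t2 * t4) / D3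
  + y4 * (t1 * t2 + t1 * t3 + t2 * t3) / D4.
Definition interp0 := - (y1 * (t2 * t3 * t4) / D1 + y2 * (t1 * t3 * t4) / D2
  + y3 * (t1 * t2 * t4) / D3 + y4 * (t1 * t2 * t3) / D4).

Lemma interp_spec : t1 <> t2 -> t1 <> t3 -> t1 <> t4 -> t2 <> t3 -> t2 <> t4 -> t3 <> t4 ->
  let q := cubic interp0 interp1 interp2 interp3 in
  [/\ q t1 = y1, q t2 = y2, q t3 = y3 & q t4 = y4].
Proof.
move=> ? ? ? ? ? ? q.
have ? : t1 - t2 <> 0 by lra. have ? : t1 - t3 <> 0 by lra.
have ? : t1 - t4 <> 0 by lra. have ? : t2 - t3 <> 0 by lra.
have ? : t2 - t4 <> 0 by lra. have ? : t3 - t4 <> 0 by lra.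
rewrite /q /cubic /interp0 /interp1 /interp2 /interp3 /D1 /D2 /D3 /D4.
by split; field; repeat split; lra.
Qed.
End CubicInterpolation.

Section QuadraticInterpolation.
Variables s u w : R.
Let al := / ((u - s) * (u - w)).
Let be := / ((w - s) * (w - u)).
Definition quad2 := al - be.
Definition quad1 := - al * (s + w) + be * (s + u).
Definition quad0 := al * s * w - be * s * u.

Lemma quad_spec : s <> u -> s <> w -> u <> w ->
  let q := cubic quad0 quad1 quad2 0 in [/\ q s = 0, q u = 1 & q w = -1].
Proof.
move=> ? ? ? q; rewrite /q /cubic /quad0 /quad1 /quad2 /al /be.
by split; field; split; lra.
Qed.
End QuadraticInterpolation.

Definition mpt (t : R) : 'I_3 -> R := pt t (t * t) (t * t * t).
Definition bpt (e s t : R) : 'I_3 -> R :=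
  pt ((s + t) / 2) ((s * s + t * t) / 2) ((s * s * s + t * t * t) / 2 + e).
Definition cpt (e s t : R) : 'I_3 -> R :=
  pt ((s + t) / 2) ((s * s + t * t) / 2 + e) ((s * s * s + t * t * t) / 2).

Section FormValues.
Variables c0 c1 c2 c3 e s t : R.
Local Notation f := (aff_form c0 (pt c1 c2 c3)).
Local Notation q := (cubic c0 c1 c2 c3).

Lemma form_mpt : f (mpt t) = q t.
Proof. by rewrite /mpt aff_form_pt /cubic; ring. Qed.

Lemma form_bpt : f (bpt e s t) = (q s + q t) / 2 + e * c3.
Proof. by rewrite /bpt aff_form_pt /cubic; field. Qed.

Lemma form_cpt : f (cpt e s t) = (q s + q t) / 2 + e * c2.
Proof. by rewrite /cpt aff_form_pt /cubic; field. Qed.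
End FormValues.

Lemma tetra_aff_indep e s t a d b c : s <> t -> e <> 0 ->
  a + (d + (b + c)) = 0 ->
  a * s + (d * t + (b * ((s + t) / 2) + c * ((s + t) / 2))) = 0 ->
  a * (s * s) + (d * (t * t) + (b * ((s * s + t * t) / 2)
    + c * ((s * s + t * t) / 2 + e))) = 0 ->
  a * (s * s * s) + (d * (t * t * t) + (b * ((s * s * s + t * t * t) / 2 + e)
    + c * ((s * s * s + t * t * t) / 2))) = 0 ->
  [/\ a = 0, d = 0, b = 0 & c = 0].
Proof.
move=> Hst He H0 H1 H2 H3.
have Had : a = d.
  have : (a - d) * (s - t) = 0.
    have -> : (a - d) * (s - t) = 2 * (a * s + (d * t + (b * ((s + t) / 2)
      + c * ((s + t) / 2)))) - (s + t) * (a + (d + (b + c))) by field.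
    by rewrite H1 H0; ring.
  by case/Rmult_integral => H; lra.
have Hc : e * c = 0.
  have <- : (a * (s * s) + (d * (t * t) + (b * ((s * s + t * t) / 2)
    + c * ((s * s + t * t) / 2 + e)))) - (s * s + t * t) / 2 * (a + (d + (b + c)))
    - (a - d) * (s * s - t * t) / 2 = e * c by field.
  by rewrite H2 H0 Had; field.
have Hb : e * b = 0.
  have <- : (a * (s * s * s) + (d * (t * t * t) + (b * ((s * s * s + t * t * t) / 2 + e)
    + c * ((s * s * s + t * t * t) / 2)))) - (s * s * s + t * t * t) / 2 * (a + (d + (b + c)))
    - (a - d) * (s * s * s - t * t * t) / 2 = e * b by field.
  by rewrite H3 H0 Had; field.
have Hc0 : c = 0 by case/Rmult_integral: Hc.
have Hb0 : b = 0 by case/Rmult_integral: Hb.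
by split; lra.
Qed.

Definition point (e : R) (m x : nat) : 'I_3 -> R :=
  let i := (x %/ m)%N in let j := (x %% m)%N in
  if i == j then mpt (INR i)
  else if (i < j)%N then bpt e (INR i) (INR j) else cpt e (INR j) (INR i).

Lemma INR_neq i j : i != j -> INR i <> INR j.
Proof. by move=> Hij; apply: not_INR => /eqP; apply/negP. Qed.

Definition sep_coef (c : R -> R -> R -> R -> R -> R -> R -> R -> R) (i j k l : nat) : R :=
  c (INR i) (INR j) (INR k) (INR l) 1 1 (-1) (-1).

Section Construction.
Variables (n' m : nat).
Hypothesis Hmn : (m * m <= n'.+1)%N.

Definition vtx (i j : nat) : 'I_n'.+1 := inord (i * m + j).
Definition edge (i j : nat) : {set 'I_n'.+1} :=
  vtx i i |: (vtx j j |: (vtx i j |: [set vtx j i])).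

Lemma edgeC i j : edge i j = edge j i.
Proof.
apply/setP => v; rewrite /edge !in_setU1 !in_set1.
by case: (v == vtx i i); case: (v == vtx j j); case: (v == vtx i j); case: (v == vtx j i).
Qed.

Lemma vtx_val i j : (i < m)%N -> (j < m)%N -> vtx i j = (i * m + j)%N :> nat.
Proof. by move=> Hi Hj; rewrite inordK //; apply: leq_trans Hmn; nia. Qed.

Lemma vtx_inj i j k l : (i < m)%N -> (j < m)%N -> (k < m)%N -> (l < m)%N ->
  vtx i j = vtx k l -> i = k /\ j = l.
Proof.
move=> Hi Hj Hk Hl /(congr1 (@nat_of_ord _)); rewrite !vtx_val // => E.
have Hm : (0 < m)%N by apply: leq_ltn_trans Hj.
have := congr1 (fun x => x %/ m)%N E; have := congr1 (fun x => x %% m)%N E.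
by rewrite /= !divnMDl // !modnMDl !divn_small // !modn_small // !addn0.
Qed.

Lemma vtx_eq i j k l : (i < m)%N -> (j < m)%N -> (k < m)%N -> (l < m)%N ->
  (vtx i j == vtx k l) = (i == k) && (j == l).
Proof.
move=> Hi Hj Hk Hl; apply/eqP/andP => [/vtx_inj [] // -> -> | [/eqP -> /eqP ->]] //.
Qed.

Lemma point_vtx e i j : (i < m)%N -> (j < m)%N ->
  point e m (vtx i j) = if i == j then mpt (INR i)
    else if (i < j)%N then bpt e (INR i) (INR j) else cpt e (INR j) (INR i).
Proof.
move=> Hi Hj; have Hm : (0 < m)%N by apply: leq_ltn_trans Hj.
by rewrite /point vtx_val // divnMDl // modnMDl divn_small // modn_small // addn0.
Qed.

Section Edge.
Variables i j : nat.
Hypotheses (Hi : (i < m)%N) (Hj : (j < m)%N) (Hij : i != j).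

Lemma edge_notin1 : vtx i i \notin vtx j j |: (vtx i j |: [set vtx j i]).
Proof. by rewrite !in_setU1 in_set1 !vtx_eq // eqxx (negbTE Hij). Qed.

Lemma edge_notin2 : vtx j j \notin vtx i j |: [set vtx j i].
Proof. by rewrite in_setU1 in_set1 !vtx_eq // eqxx (eq_sym j i) (negbTE Hij). Qed.

Lemma edge_notin3 : vtx i j \notin [set vtx j i].
Proof. by rewrite in_set1 vtx_eq // (negbTE Hij). Qed.

Lemma card_edge : #|edge i j| = 4%N.
Proof. by rewrite /edge !cardsU1 cards1 edge_notin1 edge_notin2 edge_notin3. Qed.

Lemma sum_edge (F : 'I_n'.+1 -> R) : \big[Rplus/R0]_(v in edge i j) F v =
  F (vtx i i) + (F (vtx j j) + (F (vtx i j) + F (vtx j i))).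
Proof.
rewrite /edge big_setU1 ?edge_notin1 // big_setU1 ?edge_notin2 //.
by rewrite big_setU1 ?edge_notin3 // big_set1.
Qed.

End Edge.

Lemma mem_edge i j v : v \in edge i j ->
  [\/ v = vtx i i, v = vtx j j, v = vtx i j | v = vtx j i].
Proof.
rewrite /edge !in_setU1 in_set1.
by case/or4P => /eqP ->; [apply: Or41 | apply: Or42 | apply: Or43 | apply: Or44].
Qed.

Section Embedding.
Variable e : R.
Hypothesis e_neq0 : e <> 0.
Local Notation phi := (point e m).

Lemma edge_aff_indep i j : (i < m)%N -> (j < m)%N -> i != j -> aff_indep phi (edge i j).
Proof.
wlog Hlt : i j / (i < j)%N.
  move=> Hwlog Hi Hj Hij; case: (ltngtP i j) => Hc; first exact: Hwlog.
    by rewrite edgeC; apply: Hwlog; rewrite // eq_sym.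
  by rewrite Hc eqxx in Hij.
move=> Hi Hj Hij lam Hs Hc.
have Hx := Hc ord0; have Hy := Hc (@Ordinal 3 1 isT); have Hz := Hc (@Ordinal 3 2 isT).
move: Hs Hx Hy Hz; rewrite !sum_edge // !point_vtx // !eqxx (negbTE Hij) (eq_sym j i)
  (negbTE Hij) Hlt ltnNge (ltnW Hlt) /mpt /bpt /cpt /pt /= => Hs Hx Hy Hz.
have [Ha Hd Hb Hc'] := tetra_aff_indep (INR_neq Hij) e_neq0 Hs Hx Hy Hz.
by move=> v /mem_edge [] ->.
Qed.

Section FormOnEdges.
Variables c0 c1 c2 c3 : R.
Local Notation f := (aff_form c0 (pt c1 c2 c3)).
Local Notation q i := (cubic c0 c1 c2 c3 (INR i)).

Lemma form_vtx_diag i : (i < m)%N -> f (phi (vtx i i)) = q i.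
Proof. by move=> Hi; rewrite point_vtx // eqxx form_mpt. Qed.

Lemma form_vtx_off i j : (i < m)%N -> (j < m)%N -> i != j ->
  f (phi (vtx i j)) = (q i + q j) / 2 + e * c3 \/
  f (phi (vtx i j)) = (q i + q j) / 2 + e * c2.
Proof.
move=> Hi Hj Hij; rewrite point_vtx // (negbTE Hij) /=.
by case: ifP => _; [left; rewrite form_bpt | right; rewrite form_cpt; lra].
Qed.

Lemma edges_separated i j k l :
  (i < m)%N -> (j < m)%N -> (k < m)%N -> (l < m)%N -> i != j -> k != l ->
  0 <= q i -> 0 <= q j ->
  0 < (q i + q j) / 2 + e * c3 -> 0 < (q i + q j) / 2 + e * c2 ->
  (q i = 0 -> vtx i i \in edge k l) -> (q j = 0 -> vtx j j \in edge k l) ->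
  q k <= 0 -> q l <= 0 ->
  (q k + q l) / 2 + e * c3 <= 0 -> (q k + q l) / 2 + e * c2 <= 0 ->
  forall x, (in_conv phi (edge i j) x /\ in_conv phi (edge k l) x) <->
            in_conv phi (edge i j :&: edge k l) x.
Proof.
move=> Hi Hj Hk Hl Hij Hkl Hqi Hqj Hb Hc Hzi Hzj Hqk Hql Hb' Hc'.
have Hji : j != i by rewrite eq_sym.
have Hlk : l != k by rewrite eq_sym.
apply: (separated_meet (c0 := c0) (c := pt c1 c2 c3)).
- move=> v /mem_edge [] ->; rewrite ?form_vtx_diag //.
    by case: (form_vtx_off Hi Hj Hij) => ->; lra.
  by case: (form_vtx_off Hj Hi Hji) => ->; lra.
- move=> v /mem_edge [] ->; rewrite ?form_vtx_diag // => Hf.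
    by move: Hf; case: (form_vtx_off Hi Hj Hij) => ->; lra.
  by move: Hf; case: (form_vtx_off Hj Hi Hji) => ->; lra.
- move=> v /mem_edge [] ->; rewrite ?form_vtx_diag //.
    by case: (form_vtx_off Hk Hl Hkl) => ->; lra.
  by case: (form_vtx_off Hl Hk Hlk) => ->; lra.
Qed.

End FormOnEdges.

Hypothesis small_sep : forall i j k l,
  (i < m)%N -> (j < m)%N -> (k < m)%N -> (l < m)%N ->
  Rabs (e * sep_coef interp2 i j k l) < 1/2 /\ Rabs (e * sep_coef interp3 i j k l) < 1/2.
Hypothesis small_quad : forall s u w, (s < m)%N -> (u < m)%N -> (w < m)%N ->
  Rabs (e * quad2 (INR s) (INR u) (INR w)) < 1/2.

Lemma disjoint_edges_meet i j k l :
  (i < m)%N -> (j < m)%N -> (k < m)%N -> (l < m)%N ->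
  i != j -> i != k -> i != l -> j != k -> j != l -> k != l ->
  forall x, (in_conv phi (edge i j) x /\ in_conv phi (edge k l) x) <->
            in_conv phi (edge i j :&: edge k l) x.
Proof.
move=> Hi Hj Hk Hl Hij Hik Hil Hjk Hjl Hkl.
have [qi qj qk ql] := interp_spec 1 1 (-1) (-1) (INR_neq Hij) (INR_neq Hik) (INR_neq Hil)
  (INR_neq Hjk) (INR_neq Hjl) (INR_neq Hkl).
have := small_sep Hi Hj Hk Hl; rewrite /sep_coef.
move=> [/Rabs_def2 [Hc2 Hc2'] /Rabs_def2 [Hc3 Hc3']].
apply: (edges_separated (c0 := sep_coef interp0 i j k l) (c1 := sep_coef interp1 i j k l)
  (c2 := sep_coef interp2 i j k l) (c3 := sep_coef interp3 i j k l)) => //;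
  rewrite /sep_coef ?qi ?qj ?qk ?ql; lra.
Qed.

Lemma shared_edges_meet s u w :
  (s < m)%N -> (u < m)%N -> (w < m)%N -> s != u -> s != w ->
  forall x, (in_conv phi (edge s u) x /\ in_conv phi (edge s w) x) <->
            in_conv phi (edge s u :&: edge s w) x.
Proof.
move=> Hs Hu Hw Hsu Hsw; case: (eqVneq u w) => [<- | Huw].
  by rewrite setIid => x; tauto.
have [qs qu qw] := quad_spec (INR_neq Hsu) (INR_neq Hsw) (INR_neq Huw).
have /Rabs_def2 [Hc2 Hc2'] := small_quad Hs Hu Hw.
have Hss : vtx s s \in edge s w by rewrite /edge setU11.
apply: (edges_separated (c0 := quad0 (INR s) (INR u) (INR w))
  (c1 := quad1 (INR s) (INR u) (INR w)) (c2 := quad2 (INR s) (INR u) (INR w)) (c3 := 0))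
  => //; rewrite ?qs ?qu ?qw; lra.
Qed.

Lemma edges_meet i j k l :
  (i < m)%N -> (j < m)%N -> (k < m)%N -> (l < m)%N -> i != j -> k != l ->
  forall x, (in_conv phi (edge i j) x /\ in_conv phi (edge k l) x) <->
            in_conv phi (edge i j :&: edge k l) x.
Proof.
move=> Hi Hj Hk Hl Hij Hkl.
case: (eqVneq i k) => [Eik | Hik]; first by subst k; exact: shared_edges_meet.
case: (eqVneq i l) => [Eil | Hil].
  by subst l; rewrite [edge k i]edgeC; apply: shared_edges_meet; rewrite // eq_sym.
case: (eqVneq j k) => [Ejk | Hjk].
  by subst k; rewrite [edge i j]edgeC; apply: shared_edges_meet; rewrite // eq_sym.
case: (eqVneq j l) => [Ejl | Hjl].
  subst l; rewrite [edge i j]edgeC [edge k j]edgeC.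
  by apply: shared_edges_meet; rewrite // eq_sym.
exact: disjoint_edges_meet.
Qed.

End Embedding.

Definition sq_edges : {set {set 'I_n'.+1}} :=
  [set S | [exists i : 'I_m, exists j : 'I_m, (i != j) && (S == edge i j)]].

Lemma sq_edgesP S : S \in sq_edges ->
  exists i j, [/\ (i < m)%N, (j < m)%N, i != j & S = edge i j].
Proof. by rewrite inE => /existsP [i /existsP [j /andP [Hij /eqP ->]]]; exists i, j. Qed.

Lemma sq_uniform S : S \in sq_edges -> #|S| = 4%N.
Proof. by case/sq_edgesP => i [j [Hi Hj Hij ->]]; apply: card_edge. Qed.

Definition sq_hypergraph : hypergraph n'.+1 4 := Hypergraph sq_uniform.

Lemma sq_embeddable : embeddable 3 sq_hypergraph.
Proof.
pose F (p : ('I_m * 'I_m * 'I_m * 'I_m * bool) + ('I_m * 'I_m * 'I_m)) : R :=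
  match p with
  | inl (i, j, k, l, b) => sep_coef (if b then interp2 else interp3) i j k l
  | inr (s, u, w) => quad2 (INR s) (INR u) (INR w)
  end.
have [e [He small]] := uniform_small_factor F.
have He0 : e <> 0 by lra.
exists (point e m); split.
  by move=> S /sq_edgesP [i [j [Hi Hj Hij ->]]]; apply: edge_aff_indep.
move=> S1 S2 /sq_edgesP [i [j [Hi Hj Hij ->]]] /sq_edgesP [k [l [Hk Hl Hkl ->]]].
apply: edges_meet => // [i' j' k' l' Hi' Hj' Hk' Hl' | s u w Hs Hu Hw].
  split; [exact: (small (inl (Ordinal Hi', Ordinal Hj', Ordinal Hk', Ordinal Hl', true)))
         | exact: (small (inl (Ordinal Hi', Ordinal Hj', Ordinal Hk', Ordinal Hl', false)))].
exact: (small (inr (Ordinal Hs, Ordinal Hu, Ordinal Hw))).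
Qed.

(* Any two diagonal vertices share an edge, so they get distinct colours. *)
Lemma sq_chis : (m <= chis sq_hypergraph)%N.
Proof.
rewrite /chis; case: ex_minnP => c /existsP [kappa /forallP Hk] _.
pose g (i : 'I_m) : 'I_c := kappa (vtx i i).
suff /leq_card : injective g by rewrite !card_ord.
move=> i j; apply: contra_eq => Hij.
have Hedge : edge i j \in hedges sq_hypergraph.
  by rewrite inE; apply/existsP; exists i; apply/existsP; exists j; rewrite Hij eqxx.
have /imset_injP Hinj : #|kappa @: edge i j| == #|edge i j|.
  by have := Hk (edge i j); rewrite Hedge /= => /eqP ->; rewrite card_edge.
rewrite /g; apply/eqP => /Hinj; rewrite /edge !in_setU1 !eqxx orbT => /(_ isT isT) /eqP.
by rewrite vtx_eq // andbb => /eqP /val_inj Eij; rewrite Eij eqxx in Hij.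
Qed.

End Construction.

Local Close Scope R_scope.

Theorem mainTheorem9 (n : nat) :
  4 <= n ->
  exists H : hypergraph n 4, embeddable 3 H /\ Nat.sqrt n <= chis H.
Proof.
case: n => [|n'] // _.
have Hmn : Nat.sqrt n'.+1 * Nat.sqrt n'.+1 <= n'.+1.
  by apply/leP; case: (Nat.sqrt_spec' n'.+1).
by exists (sq_hypergraph Hmn); split; [exact: sq_embeddable | exact: sq_chis].
Qed.
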